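(* Let $(L_1,[\cdot,\cdot]_1,\alpha_1),\dots,(L_n,[\cdot,\cdot]_n,\alpha_n)$ be Hom-Lie algebras over a field $F$ and let $\mu_i$ be a fuzzy Hom-Lie subalgebra of $L_i$ for $i=1,\dots,n$. Then $\mu_1\oplus\cdots\oplus\mu_n$ is a fuzzy Hom-Lie subalgebra of the Hom-Lie algebra $(L_1\oplus\cdots\oplus L_n,[\cdot,\cdot],\alpha_1+\cdots+\alpha_n)$.
   Context: A Hom-Lie algebra over $F$ is a triple $(L,[\cdot,\cdot],\alpha)$ with $L$ an $F$-vector space, $\alpha:L\to L$ linear and $[\cdot,\cdot]$ bilinear, skew-symmetric, satisfying $[\alpha(x),[y,z]]+[\alpha(y),[z,x]]+[\alpha(z),[x,y]]=0$. The direct sum $L_1\oplus\cdots\oplus L_n$ is a Hom-Lie algebra with componentwise bracket $[(x_1,\dots,x_n),(y_1,\dots,y_n)]=([x_1,y_1]_1,\dots,[x_n,y_n]_n)$ and twisting map $(\alpha_1+\cdots+\alpha_n)(x_1,\dots,x_n)=(\alpha_1(x_1),\dots,\alpha_n(x_n))$. For fuzzy subsets $\mu_i:L_i\to[0,1]$, $(\mu_1\oplus\cdots\oplus\mu_n)(x_1,\dots,x_n)=\mu_1(x_1)\wedge\cdots\wedge\mu_n(x_n)$, where $\wedge$ is minimum. A fuzzy subset $\mu$ of a Hom-Lie algebra $L$ is a fuzzy Hom-Lie subalgebra if for all $x,y\in L$, $c\in F$: $\mu(x+y)\ge\mu(x)\wedge\mu(y)$, $\mu(cx)\ge\mu(x)$,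 $\mu([x,y])\ge\mu(x)\wedge\mu(y)$, $\mu(\alpha(x))\ge\mu(x)$. *)

From HB Require Import structures.
From mathcomp Require Import all_boot all_order all_algebra.
From mathcomp Require Import reals.
Set Implicit Arguments. Unset Strict Implicit. Unset Printing Implicit Defensive.
Import Order.TTheory GRing.Theory Num.Theory.
Local Open Scope ring_scope.

Definition is_homlie (F : fieldType) (V : lmodType F)
  (br : V -> V -> V) (al : V -> V) : Prop :=
  [/\ (forall (a : F) (x y : V), al (a *: x + y) = a *: al x + al y),
      (forall (a : F) (x y z : V), br (a *: x + y) z = a *: br x z + br y z),
      (forall (a : F) (x y z : V), br z (a *: x + y) = a *: br z x + br z y),
      (forall x y : V, br x y = - br y x)
    & (forall x y z : V,
         br (al x) (br y z) + br (al y) (br z x) + br (al z) (br x y) = 0)].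

Definition fuzzy_subset (R : realType) (V : Type) (mu : V -> R) : Prop :=
  forall x, 0 <= mu x <= 1.

Definition fuzzy_homlie_sub (R : realType) (F V : Type)
  (add : V -> V -> V) (scale : F -> V -> V)
  (br : V -> V -> V) (al : V -> V) (mu : V -> R) : Prop :=
  [/\ fuzzy_subset mu,
      (forall x y, Num.min (mu x) (mu y) <= mu (add x y)),
      (forall (c : F) x, mu x <= mu (scale c x)),
      (forall x y, Num.min (mu x) (mu y) <= mu (br x y))
    & (forall x, mu x <= mu (al x))].

Section DirectSum.
Variables (F : fieldType) (n : nat) (L : 'I_n -> lmodType F).

Definition dsum := forall i : 'I_n, L i.
Definition dsum_add (x y : dsum) : dsum := fun i => x i + y i.
Definition dsum_scale (c : F) (x : dsum) : dsum := fun i => c *: x i.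
Definition dsum_br (br : forall i, L i -> L i -> L i) (x y : dsum) : dsum :=
  fun i => br i (x i) (y i).
Definition dsum_alpha (al : forall i, L i -> L i) (x : dsum) : dsum :=
  fun i => al i (x i).
Definition dsum_fuzzy (R : realType) (mu : forall i, L i -> R) (x : dsum) : R :=
  \big[Num.min/1]_(i < n) mu i (x i).
End DirectSum.

From mathcomp Require Import all_boot all_order all_algebra.
From mathcomp Require Import reals.
Import Order.TTheory GRing.Theory Num.Theory.
Local Open Scope ring_scope.

(* Every operation of the direct sum acts componentwise and the fuzzy direct
   sum is the minimum of the components, so each closure inequality for
   mu_1 (+) ... (+) mu_n is the minimum over i of the same inequality for
   mu_i. *)

Section FuzzyDirectSum.
Context {R : realType} {F : fieldType} {n : nat} {L : 'I_n -> lmodType F}.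
Context {mu : forall i, L i -> R}.

Lemma dsum_fuzzy_le (x : dsum L) i : dsum_fuzzy mu x <= mu i (x i).
Proof. exact: bigmin_le. Qed.

Lemma dsum_fuzzy_le1 (x : dsum L) : dsum_fuzzy mu x <= 1.
Proof. by rewrite /dsum_fuzzy bigmin_idl ge_min lexx. Qed.

Lemma dsum_fuzzy_subset :
  (forall i, fuzzy_subset (mu i)) -> fuzzy_subset (dsum_fuzzy mu).
Proof.
move=> mu01 x; rewrite dsum_fuzzy_le1 andbT.
by apply: le_bigmin => // i _; case/andP: (mu01 i (x i)).
Qed.

Lemma le_dsum_fuzzy_map (f : forall i, L i -> L i) :
  (forall i x, mu i x <= mu i (f i x)) ->
  forall x : dsum L, dsum_fuzzy mu x <= dsum_fuzzy mu (fun i => f i (x i)).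
Proof.
move=> mu_f x; apply: le_bigmin => [|i _]; first exact: dsum_fuzzy_le1.
exact: le_trans (dsum_fuzzy_le x i) (mu_f i (x i)).
Qed.

Lemma le_dsum_fuzzy_map2 (f : forall i, L i -> L i -> L i) :
  (forall i x y, Num.min (mu i x) (mu i y) <= mu i (f i x y)) ->
  forall x y : dsum L, Num.min (dsum_fuzzy mu x) (dsum_fuzzy mu y)
                       <= dsum_fuzzy mu (fun i => f i (x i) (y i)).
Proof.
move=> mu_f x y; apply: le_bigmin => [|i _].
  by rewrite ge_min dsum_fuzzy_le1.
apply: le_trans (mu_f i (x i) (y i)).
by rewrite le_min !ge_min !dsum_fuzzy_le orbT.
Qed.

End FuzzyDirectSum.

Theorem theorem5p1 (R : realType) (F : fieldType) (n : nat)
  (L : 'I_n -> lmodType F)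
  (br : forall i, L i -> L i -> L i) (al : forall i, L i -> L i)
  (mu : forall i, L i -> R) :
  (forall i, is_homlie (br i) (al i)) ->
  (forall i, fuzzy_homlie_sub (@GRing.add (L i)) (@GRing.scale F (L i))
                              (br i) (al i) (mu i)) ->
  fuzzy_homlie_sub (@dsum_add F n L) (@dsum_scale F n L)
    (dsum_br br) (dsum_alpha al) (dsum_fuzzy mu).
Proof.
move=> _ mu_sub; split.
- by apply: dsum_fuzzy_subset => i; case: (mu_sub i).
- by apply: (le_dsum_fuzzy_map2 (fun i => +%R)) => i; case: (mu_sub i).
- by move=> c; apply: (le_dsum_fuzzy_map (fun i => *:%R c)) => i; case: (mu_sub i).
- by apply: (le_dsum_fuzzy_map2 br) => i; case: (mu_sub i).
- by apply: (le_dsum_fuzzy_map al) => i; case: (mu_sub i).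
Qed.
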